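(* For every $A \in S(4,\mathbb{R})$ and every $P \in \operatorname{Sp}(4)$, we have $\operatorname{Pf}(P^T A P) = \operatorname{Pf}(A)$ and $\operatorname{s}(P^T A P) = \operatorname{s}(A)$. That is, the Pfaffian and the sum function are invariant under the action $\rho(P,A) = P^T A P$ of $\operatorname{Sp}(4)$ on $S(4,\mathbb{R})$.
   Context: $S(4,\mathbb{R}) = \{A \in M(4,\mathbb{R}) : A^T = -A,\ \det A \neq 0\}$. $J$ is the $4\times 4$ block-diagonal matrix $\operatorname{diag}(J_0,J_0)$ with $J_0 = \begin{bmatrix} 0 & 1 \\ -1 & 0\end{bmatrix}$, and $\operatorname{Sp}(4) = \{P \in M(4,\mathbb{R}) : P^T J P = J\}$. For $A = \begin{bmatrix} 0 & a & b & c \\ -a & 0 & d & e \\ -b & -d & 0 & f \\ -c & -e & -f & 0\end{bmatrix}$, the Pfaffian is $\operatorname{Pf}(A) = af - be + cd$ and the sum function is $\operatorname{s}(A) = a + f$. *)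

From HB Require Import structures.
From mathcomp Require Import all_boot all_order all_algebra.
From mathcomp Require Import reals.
Set Implicit Arguments. Unset Strict Implicit. Unset Printing Implicit Defensive.
Import Order.TTheory GRing.Theory Num.Theory.
Local Open Scope ring_scope.

(* indices 0..3 of 'I_4 (paper's rows/columns 1..4) *)
Definition i0 : 'I_4 := @Ordinal 4 0 isT.
Definition i1 : 'I_4 := @Ordinal 4 1 isT.
Definition i2 : 'I_4 := @Ordinal 4 2 isT.
Definition i3 : 'I_4 := @Ordinal 4 3 isT.

Definition S4 (R : realType) (A : 'M[R]_4) : Prop :=
  A^T = - A /\ \det A != 0.

(* J0 = [[0,1],[-1,0]] and J = diag(J0, J0) *)
Definition J0 (R : realType) : 'M[R]_2 :=
  \matrix_(i < 2, j < 2)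
    (if (val i == 0%N) && (val j == 1%N) then 1
     else if (val i == 1%N) && (val j == 0%N) then -1 else 0).

Definition J4 (R : realType) : 'M[R]_4 := block_mx (J0 R) 0 0 (J0 R).

Definition Sp4 (R : realType) (P : 'M[R]_4) : Prop :=
  P^T *m J4 R *m P = J4 R.

(* With A = [[0,a,b,c],[-a,0,d,e],[-b,-d,0,f],[-c,-e,-f,0]]:
   a = A 0 1, b = A 0 2, c = A 0 3, d = A 1 2, e = A 1 3, f = A 2 3. *)
Definition Pf (R : realType) (A : 'M[R]_4) : R :=
  A i0 i1 * A i2 i3 - A i0 i2 * A i1 i3 + A i0 i3 * A i1 i2.

Definition sfun (R : realType) (A : 'M[R]_4) : R := A i0 i1 + A i2 i3.

From HB Require Import structures.
From mathcomp Require Import all_boot all_order all_algebra.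
From mathcomp Require Import reals.
From mathcomp Require Import ring.
Set Implicit Arguments. Unset Strict Implicit.
Import Order.TTheory GRing.Theory Num.Theory.
Local Open Scope ring_scope.

(* For P in Sp(4) we also have P J P^T = J, so (P^T A P) J = P^T (A J) P^-T
   is conjugate to A J and the traces of its first two powers are invariant.
   For a skew-symmetric 4x4 matrix B, the matrix B J is J-self-adjoint, with
   eigenvalues λ, λ, μ, μ where λ + μ = - s(B) and λ μ = Pf(B); hence
   s(B) = - tr(B J) / 2 and Pf(B) = (tr(B J)^2 - 2 tr((B J)^2)) / 8. *)

Lemma trmx_preserves_form (R : comUnitRingType) n (J M : 'M[R]_n) :
  J *m J = - 1%:M -> M^T *m J *m M = J -> M *m J *m M^T = J.
Proof.
move=> JJ MtJM.
(* [- J M J] is a right, hence a left, inverse of [M^T]. *)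
have : M^T *m - (J *m M *m J) = 1%:M by rewrite mulmxN !mulmxA MtJM JJ opprK.
move=> /mulmx1C /(congr1 (mulmx J)).
by rewrite mulmx1 mulNmx mulmxN !mulmxA JJ !mulNmx mul1mx opprK.
Qed.

Lemma trmx_congr_skew (R : comRingType) m n (A : 'M[R]_m) (M : 'M[R]_(m, n)) :
  A^T = - A -> (M^T *m A *m M)^T = - (M^T *m A *m M).
Proof. by move=> skA; rewrite !trmx_mul trmxK skA mulNmx mulmxN mulmxA. Qed.

Section CongruenceTrace.

Variables (R : comRingType) (n : nat) (J M : 'M[R]_n).
Hypothesis MJMt : M *m J *m M^T = J.

Let congr_mulmxE (A : 'M[R]_n) : M^T *m A *m M *m J = M^T *m (A *m M *m J).
Proof. by rewrite !mulmxA. Qed.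

Let congr_mulmxK (A : 'M[R]_n) : A *m M *m J *m M^T = A *m J.
Proof. by rewrite -!mulmxA (mulmxA M) MJMt. Qed.

Lemma mxtrace_congr_form (A : 'M[R]_n) :
  \tr (M^T *m A *m M *m J) = \tr (A *m J).
Proof. by rewrite congr_mulmxE mxtrace_mulC congr_mulmxK. Qed.

Lemma mxtrace_sqr_congr_form (A : 'M[R]_n) :
  \tr ((M^T *m A *m M *m J) *m (M^T *m A *m M *m J)) =
  \tr ((A *m J) *m (A *m J)).
Proof.
rewrite congr_mulmxE; have := congr_mulmxK A; move: (A *m M *m J) => X XMt.
by rewrite -mulmxA mxtrace_mulC -!mulmxA mulmxA XMt !mulmxA.
Qed.

End CongruenceTrace.

Lemma skew_mxE (R : zmodType) n (A : 'M[R]_n) :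
  A^T = - A -> forall i j, A j i = - A i j.
Proof. by move=> /matrixP skA i j; have := skA i j; rewrite !mxE. Qed.

Lemma skew_mx_diag (R : numDomainType) n (A : 'M[R]_n) :
  A^T = - A -> forall i, A i i = 0.
Proof.
move=> /skew_mxE skA i; move/eqP: (skA i i).
by rewrite -addr_eq0 -mulr2n -mulr_natr mulf_eq0 pnatr_eq0 orbF => /eqP.
Qed.

Lemma sum_ord4 (V : nmodType) (F : 'I_4 -> V) :
  \sum_(i < 4) F i = F i0 + F i1 + F i2 + F i3.
Proof.
rewrite !big_ord_recl big_ord0 addr0 !addrA.
by congr (F _ + F _ + F _ + F _); apply: val_inj.
Qed.

Lemma J0_sqr (R : realType) : J0 R *m J0 R = - 1%:M.
Proof.
apply/matrixP=> i j; rewrite !mxE !big_ord_recl big_ord0 !mxE.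
by case: i j => [[|[|?]] ?] [[|[|?]] ?] //=; ring.
Qed.

Lemma J4_sqr (R : realType) : J4 R *m J4 R = - 1%:M.
Proof.
rewrite /J4 (@mulmx_block _ 2 2 2 2 2 2) !mulmx0 !mul0mx !addr0 !add0r J0_sqr.
by rewrite (scalar_mx_block 2 2) (@opp_block_mx _ 2 2 2 2) oppr0.
Qed.

Lemma J4E (R : realType) : J4 R = \matrix_(i, j)
  if (i == i0) && (j == i1) then 1 else if (i == i1) && (j == i0) then -1
  else if (i == i2) && (j == i3) then 1 else if (i == i3) && (j == i2) then -1
  else 0.
Proof.
apply/matrixP=> i j; rewrite [RHS]mxE.
case: i j => [[|[|[|[|?]]]] ?] [[|[|[|[|?]]]] ?] //; rewrite /J4 !mxE;
case: splitP => k ik; rewrite !mxE; case: splitP => l jl; rewrite ?mxE;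
by case: k l ik jl => [[|[|?]] ?] [[|[|?]] ?].
Qed.

Lemma mulmx_J4E (R : realType) (B : 'M[R]_4) : B *m J4 R = \matrix_(i, j)
  if j == i0 then - B i i1 else if j == i1 then B i i0
  else if j == i2 then - B i i3 else B i i2.
Proof.
apply/matrixP=> i j; rewrite J4E !mxE sum_ord4 !mxE.
by case: j => [[|[|[|[|?]]]] ?] //=; ring.
Qed.

Section Skew4.

Variables (R : realType) (B : 'M[R]_4).
Hypothesis skB : B^T = - B.

Let skew4E := (skew_mx_diag skB,
  skew_mxE skB i0 i1, skew_mxE skB i0 i2, skew_mxE skB i0 i3,
  skew_mxE skB i1 i2, skew_mxE skB i1 i3, skew_mxE skB i2 i3).

Lemma sfun_mxtrace : sfun B = - \tr (B *m J4 R) / 2.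
Proof.
rewrite mulmx_J4E /sfun /mxtrace !(sum_ord4, mxE) /= !skew4E.
by field.
Qed.

Lemma Pf_mxtrace :
  Pf B = (\tr (B *m J4 R) ^+ 2 - 2 * \tr ((B *m J4 R) *m (B *m J4 R))) / 8.
Proof.
rewrite mulmx_J4E /Pf /mxtrace !(sum_ord4, mxE) /= !skew4E.
by field.
Qed.

End Skew4.

Unset Implicit Arguments.

Theorem theorem2p1 (R : realType) (A P : 'M[R]_4) :
  S4 A -> Sp4 P ->
  Pf (P^T *m A *m P) = Pf A /\ sfun (P^T *m A *m P) = sfun A.
Proof.
move=> [skA _] spP.
have PJPt := trmx_preserves_form (J4_sqr R) spP.
have skB := trmx_congr_skew P skA.
rewrite (Pf_mxtrace skA) (Pf_mxtrace skB) (sfun_mxtrace skA) (sfun_mxtrace skB).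
by rewrite mxtrace_congr_form // mxtrace_sqr_congr_form.
Qed.
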